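(* Let $\mathcal{R}$ be a finite valuation ring of order $q^r$, where $q$ is a power of an odd prime. There is an absolute constant $C>0$ such that for every $\mathcal{A}\subset\mathcal{R}$ with $|\mathcal{A}|\ge 2q^{r-1}$, \[\max\left\{ |\mathcal{A}+\mathcal{A}|,\ |\mathcal{A}^2+\mathcal{A}^2|\right\}\ \ge\ C\min\left\{ q^{\frac{r}{2}}|\mathcal{A}|^{\frac12},\ \frac{|\mathcal{A}|^2}{q^{\frac{2r-1}{2}}}\right\}.\]
   Context: A finite valuation ring is a finite, local, principal commutative ring with identity. Its unique maximal ideal is $(z)$ for a uniformizer $z$; the residue field $\mathcal{R}/(z)$ has $q$ elements; $r$ is the smallest positive integer with $z^r=0$; then $|\mathcal{R}|=q^r$ and $|(z)|=q^{r-1}$. For $\mathcal{A}\subset\mathcal{R}$: $\mathcal{A}+\mathcal{A}=\{a+b: a,b\in\mathcal{A}\}$, $\mathcal{A}^2=\{x^2: x\in\mathcal{A}\}$, and $\mathcal{A}^2+\mathcal{A}^2=\{u+v: u,v\in\mathcal{A}^2\}$. *)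

From HB Require Import structures.
From mathcomp Require Import all_boot all_order all_algebra.
From mathcomp Require Import Rstruct.
Set Implicit Arguments. Unset Strict Implicit. Unset Printing Implicit Defensive.
Import Order.TTheory GRing.Theory Num.Theory.
Local Open Scope ring_scope.

Notation real := Rdefinitions.R.

Section FVR.
Variable Rg : finComUnitRingType.

Definition is_ideal (I : {set Rg}) : Prop :=
  [/\ 0 \in I,
      (forall x y, x \in I -> y \in I -> x + y \in I) &
      (forall a x, x \in I -> a * x \in I)].

Definition pideal (x : Rg) : {set Rg} := [set a * x | a : Rg].

Definition is_maximal_ideal (M : {set Rg}) : Prop :=
  [/\ is_ideal M, (1 : Rg) \notin M &
      forall J : {set Rg}, is_ideal J -> M \subset J -> J = M \/ (1 : Rg) \in J].

Definition is_local : Prop :=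
  exists M, is_maximal_ideal M /\ forall M', is_maximal_ideal M' -> M' = M.

Definition is_principal_ring : Prop :=
  forall I, is_ideal I -> exists x, I = pideal x.

Definition finite_valuation_ring : Prop := is_local /\ is_principal_ring.

Definition quot_card (I : {set Rg}) : nat :=
  #|[set [set x + y | y in I] | x : Rg]|.

Definition sumset (A : {set Rg}) : {set Rg} := [set a + b | a in A, b in A].
Definition sqset (A : {set Rg}) : {set Rg} := [set x ^+ 2 | x in A].

End FVR.

From HB Require Import structures.
From mathcomp Require Import all_boot all_order all_algebra.
From mathcomp Require Import fingroup cyclic.
From mathcomp Require Import Rstruct ring lra zify.
Import Order.TTheory GRing.Theory Num.Theory.
Set Implicit Arguments. Unset Strict Implicit. Unset Printing Implicit Defensive.
Local Open Scope ring_scope.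

(* The proof counts incidences between
   the points of S x T, S = A + A, T = A^2 + A^2, and the parabolas
   L_(a,b) : y = (x - a)^2 + b of R x R.
   - Structure of R: M is the set of non-units and ann(z) = (z^(r-1)); hence
     multiplication by z gives |(z^k)| = |(z^(k+1))| |(z^(r-1))|, and with
     Lagrange's theorem |R| = q |M| this yields |M| = q^(r-1), |R| = q^r = N.
     As N is odd, 2 is a unit, so squaring is at most 2-to-1 on units and
     |A| <= 2|A^2| + |M|, i.e. |A| <= 4|A^2| when |A| >= 2|M|.
   - Incidences: every L_(a,b) with a in A, b in A^2 carries the |A| points
     (a + c, b + c^2), c in A; every point lies on N parabolas; and two points
     share at most one parabola unless their abscissae differ by an element of
     M, which bounds the second moment of the incidence counts.
   - A variance (weak Cauchy-Schwarz) argument turns these three moment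
     estimates into |A|^3 |A^2| <= 4 N |M| |S| |T| whenever |S||T| < N|A|/2,
     and elementary real arithmetic gives the theorem with C = 1/4. *)

Lemma card_fibers_le (T Y : finType) (X : {set T}) (h : T -> Y) (k : nat) :
  (forall x0, x0 \in X -> #|[set x in X | h x == h x0]| <= k)%N ->
  (#|X| <= #|h @: X| * k)%N.
Proof.
move=> hk; rewrite -sum1_card (partition_big_imset h) /= -sum_nat_const.
apply: leq_sum => _ /imsetP[x0 hx0 ->]; apply: leq_trans (hk x0 hx0).
by rewrite -sum1_card; apply: eq_leq; apply: eq_bigl => x; rewrite inE.
Qed.

Lemma card_fibers (T Y : finType) (X : {set T}) (h : T -> Y) (k : nat) :
  (forall x0, x0 \in X -> #|[set x in X | h x == h x0]| = k) ->
  #|X| = (#|h @: X| * k)%N.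
Proof.
move=> hk; rewrite -sum1_card (partition_big_imset h) /= -sum_nat_const.
apply: eq_bigr => _ /imsetP[x0 hx0 ->].
by rewrite -(hk x0 hx0) -sum1_card; apply: eq_bigl => x; rewrite inE.
Qed.

Lemma sum_pred_le1 (T : finType) (A : {pred T}) (P : pred T) :
  (forall i j, P i -> P j -> i = j) -> (\sum_(i in A) (P i : nat) <= 1)%N.
Proof.
move=> P_uniq; rewrite -big_mkcondr /= sum1_card.
by apply/card_le1_eqP => i j /andP[_ Pi] /andP[_ Pj]; apply: P_uniq.
Qed.

Lemma sum_indicator_mul (T : finType) (u v : T) :
  (\sum_(t : T) ((t == u : nat) * (t == v : nat)))%N = (u == v).
Proof. by rewrite (bigD1 u) //= eqxx mul1n big1 ?addn0 // => t /negbTE ->. Qed.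

Lemma sum_setX (T1 T2 : finType) (S : {set T1}) (T : {set T2}) (F : T1 * T2 -> nat) :
  (\sum_(p in setX S T) F p = \sum_(x in S) \sum_(y in T) F (x, y))%N.
Proof. by rewrite pair_big /=; apply: eq_big => [[x y]|[x y] _]; rewrite ?inE. Qed.

Section PrincipalIdeal.
Variable Rg : finComUnitRingType.
Implicit Types w x y a : Rg.

Lemma pidealP w x : x \in pideal w <-> exists c, x = c * w.
Proof.
split; first by case/imsetP=> c _ ->; exists c.
by case=> c ->; apply/imsetP; exists c.
Qed.

Lemma pideal0 w : 0 \in pideal w.
Proof. by apply/pidealP; exists 0; rewrite mul0r. Qed.

Lemma pidealD w x y : x \in pideal w -> y \in pideal w -> x + y \in pideal w.
Proof. by move=> /pidealP[a ->] /pidealP[b ->]; apply/pidealP; exists (a + b); rewrite mulrDl. Qed.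

Lemma pidealM w a x : x \in pideal w -> a * x \in pideal w.
Proof. by move=> /pidealP[b ->]; apply/pidealP; exists (a * b); rewrite mulrA. Qed.

Lemma pideal_exp_subset w i j x :
  (j <= i)%N -> x \in pideal (w ^+ i) -> x \in pideal (w ^+ j).
Proof.
move=> ji /pidealP[c ->]; apply/pidealP; exists (c * w ^+ (i - j)).
by rewrite -mulrA -exprD subnK.
Qed.

Lemma pideal_group_set w : group_set (pideal w).
Proof. by apply/group_setP; split; [exact: pideal0 | exact: pidealD]. Qed.

Canonical pideal_group w := group (pideal_group_set w).

Lemma card_pideal_quot w : (#|pideal w| * quot_card (pideal w))%N = #|Rg|.
Proof.
rewrite -cardsT -(Lagrange (subsetT (pideal_group w))); congr (_ * _)%N.
have coset x : [set x + y | y in pideal w] = rcoset (pideal w) x.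
  apply/setP => y; rewrite rcosetE mem_rcoset; apply/imsetP/idP => [[c hc ->]|h].
    by change (x + c - x \in pideal w); rewrite addrC addKr.
  by exists (y - x); [exact: h | rewrite addrC subrK].
by apply: eq_card => C; apply/imsetP/imsetP => -[x _ ->]; exists x; rewrite ?coset.
Qed.

End PrincipalIdeal.

(* In a finite ring, |R| * 1 = 0 (Lagrange in the additive group); hence 2 is
   invertible as soon as |R| is odd. *)
Lemma two_unit_odd_card (Rg : finComUnitRingType) :
  odd #|Rg| -> (2 : Rg) \is a GRing.unit.
Proof.
move=> odd_card.
have card0 : (#|Rg|%:R : Rg) = 0.
  by have := expg_cardG (in_setT (1 : Rg)); rewrite cardsT.
apply/unitrPr; exists (#|Rg|.+1./2)%:R.
have half_odd : (2 * (#|Rg|.+1)./2 = #|Rg| + 1)%N.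
  by rewrite mul2n halfK /= odd_card subn0 addn1.
by rewrite -natrM half_odd natrD card0 add0r.
Qed.

Section ChainRing.
Variables (Rg : finComUnitRingType) (z : Rg) (r : nat).
Hypothesis max_z : is_maximal_ideal (pideal z).
Hypothesis r_gt0 : (0 < r)%N.
Hypothesis zr0 : z ^+ r = 0.
Hypothesis zk_neq0 : forall k, (0 < k < r)%N -> z ^+ k != 0.

Local Notation M := (pideal z).

Lemma one_notin_max : (1 : Rg) \notin M.
Proof. by case: max_z. Qed.

(* Elements of M are nilpotent, so 1 - m is a unit (geometric series). *)
Lemma unit_one_sub m : m \in M -> (1 - m) \is a GRing.unit.
Proof.
move=> /pidealP[c ->]; apply/unitrPr.
exists (\sum_(i < r) 1 ^+ (r.-1 - i) * (c * z) ^+ i).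
by rewrite -subrXX expr1n exprMn zr0 mulr0 subr0.
Qed.

(* A non-unit u lies in M: otherwise the ideal M + Ru strictly contains M,
   so 1 = m + a u for some m in M, and a u = 1 - m would be a unit. *)
Lemma notunit_in_max u : u \isn't a GRing.unit -> u \in M.
Proof.
move=> u_nonunit.
pose I := [set x | [exists a, x - a * u \in M]].
have I_ideal : is_ideal I.
  split.
  - by rewrite inE; apply/existsP; exists 0; rewrite mul0r subr0 pideal0.
  - move=> x y; rewrite !inE => /existsP[a ha] /existsP[b hb].
    apply/existsP; exists (a + b).
    have -> : x + y - (a + b) * u = (x - a * u) + (y - b * u) by ring.
    exact: pidealD.
  - move=> c x; rewrite !inE => /existsP[a ha]; apply/existsP; exists (c * a).
    have -> : c * x - c * a * u = c * (x - a * u) by ring.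
    exact: pidealM.
have M_sub_I : M \subset I.
  by apply/subsetP => x xM; rewrite inE; apply/existsP; exists 0; rewrite mul0r subr0.
case: max_z => _ _ /(_ I I_ideal M_sub_I) [I_eq|].
  have : u \in I by rewrite inE; apply/existsP; exists 1; rewrite mul1r subrr pideal0.
  by rewrite I_eq.
rewrite inE => /existsP[a /unit_one_sub].
rewrite opprB addrCA subrr addr0 unitrM => /andP[_ u_unit].
by rewrite u_unit in u_nonunit.
Qed.

Lemma unit_notin_max u : (u \is a GRing.unit) = (u \notin M).
Proof.
apply/idP/idP => [u_unit|]; last by apply: contraR; apply: notunit_in_max.
by apply: (contraNN _ one_notin_max) => uM; rewrite -(mulVr u_unit) pidealM.
Qed.

Lemma mul_zpow_eq0 c j : (j < r)%N -> c * z ^+ j = 0 -> c \in M.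
Proof.
move=> jr czj0; apply: notunit_in_max; apply/negP => c_unit.
have zj0 : z ^+ j = 0 by apply: (mulrI c_unit); rewrite mulr0.
case: j jr {czj0} zj0 => [_ /eqP|j jr zj0]; first by rewrite expr0 oner_eq0.
by have := @zk_neq0 j.+1; rewrite /= jr zj0 eqxx => /(_ isT).
Qed.

Lemma ann_z a : a * z = 0 -> a \in pideal (z ^+ r.-1).
Proof.
move=> az0; suff: forall j, (j <= r.-1)%N -> a \in pideal (z ^+ j) by apply.
elim=> [_|j IH jr]; first by apply/pidealP; exists a; rewrite mulr1.
have /pidealP[c ac] := IH (ltnW jr).
have /pidealP[d cd] : c \in M.
  by apply: (@mul_zpow_eq0 _ j.+1); [lia | rewrite exprSr mulrA -ac].
by apply/pidealP; exists d; rewrite ac cd -mulrA -exprS.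
Qed.

(* Multiplication by z maps (z^k) onto (z^(k+1)), and its fibers are the
   cosets of its kernel ann(z) = (z^(r-1)). *)
Lemma card_pideal_zpowS k : (k < r)%N ->
  #|pideal (z ^+ k)| = (#|pideal (z ^+ k.+1)| * #|pideal (z ^+ r.-1)|)%N.
Proof.
move=> kr; rewrite (@card_fibers _ _ _ (fun x => x * z) #|pideal (z ^+ r.-1)|).
  congr (_ * _)%N; apply: eq_card => y.
  apply/idP/idP => [/imsetP[x /pidealP[c ->] ->]|/pidealP[c ->]].
    by apply/pidealP; exists c; rewrite exprSr mulrA.
  by apply/imsetP; exists (c * z ^+ k); [apply/pidealP; exists c | rewrite exprSr mulrA].
move=> x0 x0k.
have -> : [set x in pideal (z ^+ k) | x * z == x0 * z] =
          [set x0 + y | y in pideal (z ^+ r.-1)].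
  apply/setP => x; rewrite inE; apply/andP/imsetP => [[_ /eqP xz]|[y y_ann ->]].
    exists (x - x0); last by rewrite addrC subrK.
    by apply: ann_z; rewrite mulrBl xz subrr.
  split; first by apply: (pidealD x0k); apply: (pideal_exp_subset _ y_ann); lia.
  move/pidealP: y_ann => [c ->].
  by rewrite mulrDl -mulrA -exprSr prednK // zr0 mulr0 addr0.
by rewrite card_imset //; apply: addrI.
Qed.

Lemma card_pideal_zpow n : (n <= r)%N ->
  #|pideal (z ^+ (r - n))| = (#|pideal (z ^+ r.-1)| ^ n)%N.
Proof.
elim: n => [_|n IH nr].
  rewrite subn0 zr0 expn0 -(cards1 (0 : Rg)); apply: eq_card => x.
  rewrite inE; apply/idP/eqP => [/pidealP[c ->]|->]; first by rewrite mulr0.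
  exact: pideal0.
rewrite (@card_pideal_zpowS (r - n.+1)); last by rewrite ltn_subrL.
by rewrite subnSK // (IH (ltnW nr)) expnS mulnC.
Qed.

Lemma card_max_ideal_ring :
  #|M| = (quot_card M ^ r.-1)%N /\ #|Rg| = (quot_card M ^ r)%N.
Proof.
have cardM : #|M| = (#|pideal (z ^+ r.-1)| ^ r.-1)%N.
  by rewrite -card_pideal_zpow ?leq_pred // -subn1 subKn // expr1.
have cardR : #|Rg| = (#|pideal (z ^+ r.-1)| ^ r)%N.
  rewrite -card_pideal_zpow // subnn expr0 -cardsT; apply: eq_card => x.
  by rewrite inE; symmetry; apply/pidealP; exists x; rewrite mulr1.
suff -> : quot_card M = #|pideal (z ^+ r.-1)| by [].
have M_gt0 : (0 < #|M|)%N by apply/card_gt0P; exists 0; exact: pideal0.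
apply/eqP; rewrite -(eqn_pmul2l M_gt0) card_pideal_quot cardR cardM.
by rewrite -expnSr prednK.
Qed.

Hypothesis two_unit : (2 : Rg) \is a GRing.unit.

(* On units, squaring is at most 2-to-1: if x^2 = y^2 then (x-y)(x+y) = 0,
   and x-y, x+y cannot both lie in M since their sum 2x is a unit. *)
Lemma sqr_eq_unit (x y : Rg) : x \is a GRing.unit -> x ^+ 2 = y ^+ 2 -> y = x \/ y = - x.
Proof.
move=> x_unit /eqP; rewrite -subr_eq0 subr_sqr => /eqP prod0.
case diff_unit: (x - y \is a GRing.unit).
  have : x + y = 0 by apply: (mulrI diff_unit); rewrite mulr0.
  by move=> /eqP; rewrite addrC addr_eq0 => /eqP ->; right.
case sum_unit: (x + y \is a GRing.unit).
  have : x - y = 0 by apply: (mulIr sum_unit); rewrite mul0r.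
  by move=> /eqP; rewrite subr_eq0 => /eqP ->; left.
have : 2 * x \in M.
  rewrite (_ : 2 * x = (x - y) + (x + y)); last by ring.
  by apply: pidealD; apply: notunit_in_max; rewrite ?diff_unit ?sum_unit.
by rewrite -[_ \in M]negbK -unit_notin_max unitrM two_unit x_unit.
Qed.

(* |A| <= 2|A^2| + |M|: the units of A map at most 2-to-1 onto A^2, and the
   non-units of A lie in M. *)
Lemma card_sqset (A : {set Rg}) : (#|A| <= 2 * #|sqset A| + #|M|)%N.
Proof.
set U := [set x : Rg | x \is a GRing.unit].
rewrite -(cardsID U A); apply: leq_add.
  rewrite mulnC; apply: leq_trans (@card_fibers_le _ _ (A :&: U) (fun x => x ^+ 2) 2 _) _.
    move=> x0; rewrite !inE => /andP[_ x0_unit].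
    apply: leq_trans (_ : #|[set x0; - x0]| <= 2)%N; last by rewrite cards2; case: (_ != _).
    apply: subset_leq_card; apply/subsetP => x; rewrite !inE => /andP[/andP[_ _] /eqP sq_eq].
    by case: (sqr_eq_unit x0_unit (esym sq_eq)) => ->; rewrite eqxx ?orbT.
  by rewrite leq_mul2r subset_leq_card ?orbT // imsetS // subsetIl.
apply: subset_leq_card; apply/subsetP => x; rewrite !inE => /andP[x_nonunit _].
exact: notunit_in_max.
Qed.

End ChainRing.

Section Incidences.
Variables (Rg : finComUnitRingType) (M : {set Rg}).
Hypothesis unitE : forall x : Rg, (x \is a GRing.unit) = (x \notin M).
Hypothesis two_unit : (2 : Rg) \is a GRing.unit.
Variables S T : {set Rg}.
Implicit Types (p L : Rg * Rg) (a : Rg).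

(* The unique b such that p lies on L_(a,b). *)
Definition offset p a : Rg := p.2 - (p.1 - a) ^+ 2.

Definition on_parabola p L : bool := p.2 == (p.1 - L.1) ^+ 2 + L.2.

Lemma on_parabolaE p L : on_parabola p L = (L.2 == offset p L.1).
Proof. by rewrite /offset; apply/eqP/eqP => ->; ring. Qed.

Definition incidences L : nat := \sum_(p in setX S T) (on_parabola p L : nat).

Lemma common_parabolas p p' :
  (\sum_L ((on_parabola p L : nat) * (on_parabola p' L : nat)))%N =
  (\sum_a (offset p a == offset p' a : nat))%N.
Proof.
rewrite -(pair_bigA _ (fun a b => (on_parabola p (a, b) * on_parabola p' (a, b))%N)) /=.
apply: eq_bigr => a _; rewrite -sum_indicator_mul.
by apply: eq_bigr => b _; rewrite !on_parabolaE.
Qed.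

(* Every point lies on exactly |R| parabolas, one for each a. *)
Lemma parabolas_through p : (\sum_L (on_parabola p L : nat))%N = #|Rg|.
Proof.
rewrite -sum1_card; under eq_bigr => L _ do rewrite -[on_parabola p L]andbb -mulnb.
by rewrite common_parabolas; apply: eq_bigr => a _; rewrite eqxx.
Qed.

Lemma sum_incidences : (\sum_L incidences L = #|setX S T| * #|Rg|)%N.
Proof.
rewrite exchange_big /= -sum_nat_const; apply: eq_bigr => p _.
exact: parabolas_through.
Qed.

(* If x - x' is a unit, two points with abscissae x, x' share at most one
   parabola: the difference of their offsets is affine in a with slope
   2(x - x'), a unit. *)
Lemma common_parabola_unique p p' a1 a2 : p.1 - p'.1 \notin M ->
  offset p a1 = offset p' a1 -> offset p a2 = offset p' a2 -> a1 = a2.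
Proof.
rewrite -unitE => diff_unit e1 e2.
have slope_unit : 2 * (p.1 - p'.1) \is a GRing.unit by rewrite unitrM two_unit diff_unit.
apply/eqP; rewrite -subr_eq0; apply/eqP/(mulIr slope_unit); rewrite mul0r.
transitivity ((offset p a1 - offset p' a1) - (offset p a2 - offset p' a2)).
  by rewrite /offset; ring.
by rewrite e1 e2 !subrr.
Qed.

Lemma common_parabola_snd p x' y1 y2 a :
  offset p a = offset (x', y1) a -> offset p a = offset (x', y2) a -> y1 = y2.
Proof. by rewrite /offset /= => -> /addIr. Qed.

Lemma card_near (x : Rg) : (#|[set x' in S | (x - x')%R \in M]| <= #|M|)%N.
Proof.
rewrite -(card_imset _ (fun a b (e : x - a = x - b) => oppr_inj (addrI x e))).
apply: subset_leq_card; apply/subsetP => _ /imsetP[x' + ->]; by rewrite inE => /andP[].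
Qed.

(* For a fixed point p, the pairs (p', a) with p, p' on a common parabola of
   parameter a number at most |S||T| + |M||R|: an abscissa x' with p.1 - x'
   a unit contributes at most one a per ordinate, the at most |M| others at
   most one ordinate per a. *)
Lemma common_parabolas_row p :
  (\sum_(p' in setX S T) \sum_a (offset p a == offset p' a : nat) <=
   #|S| * #|T| + #|M| * #|Rg|)%N.
Proof.
rewrite sum_setX.
apply: (@leq_trans (\sum_(x' in S) (#|T| + ((p.1 - x')%R \in M : nat) * #|Rg|))%N).
  apply: leq_sum => x' _; case near: ((p.1 - x')%R \in M).
    rewrite mul1n; apply: leq_trans (leq_addl _ _).
    rewrite exchange_big /= -[X in (_ <= X)%N]sum1_card; apply: leq_sum => a _.
    by apply: sum_pred_le1 => y1 y2 /eqP e1 /eqP e2; apply: common_parabola_snd e1 e2.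
  rewrite mul0n addn0 -[X in (_ <= X)%N]sum1_card; apply: leq_sum => y' _.
  apply: sum_pred_le1 => a1 a2 /eqP e1 /eqP e2.
  by apply: common_parabola_unique e1 e2; rewrite /= near.
rewrite big_split /= sum_nat_const -big_distrl /= leq_add2l leq_mul2r.
apply/orP; right; rewrite -big_mkcondr /= sum1_card.
by apply: leq_trans (card_near p.1); apply: subset_leq_card; apply/subsetP => x; rewrite !inE.
Qed.

(* Second moment: the number of triples (p, p', L) with p, p' on L. *)
Lemma sum_incidences_sqr :
  (\sum_L incidences L ^ 2 <= #|setX S T| * (#|S| * #|T| + #|M| * #|Rg|))%N.
Proof.
have -> : (\sum_L incidences L ^ 2 =
  \sum_(p in setX S T) \sum_(p' in setX S T) \sum_a (offset p a == offset p' a : nat))%N.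
  under eq_bigr => L _ do rewrite -mulnn /incidences big_distrl /=.
  under eq_bigr => L _ do under eq_bigr => p _ do rewrite big_distrr /=.
  rewrite exchange_big /=; apply: eq_bigr => p _.
  rewrite exchange_big /=; apply: eq_bigr => p' _.
  exact: common_parabolas.
by rewrite -sum_nat_const; apply: leq_sum => p _; apply: common_parabolas_row.
Qed.

(* If S contains A + A and T contains B + A^2, then each parabola L_(a,b)
   with a in A and b in B contains the |A| points (a + c, b + c^2), c in A. *)
Lemma incidences_lower (A B : {set Rg}) :
  (forall a c, a \in A -> c \in A -> a + c \in S) ->
  (forall b c, b \in B -> c \in A -> b + c ^+ 2 \in T) ->
  (#|setX A B| * #|A| <= \sum_(L in setX A B) incidences L)%N.
Proof.
move=> AAS BAT; rewrite -sum_nat_const; apply: leq_sum => -[a b] /setXP[aA bB].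
rewrite /incidences -big_mkcondr /= sum1_card.
have shift_inj : injective (fun c => (a + c, b + c ^+ 2)) by move=> c1 c2 [] /addrI.
rewrite -(card_imset _ shift_inj); apply: subset_leq_card.
apply/subsetP => _ /imsetP[c cA ->]; rewrite unfold_in in_setX AAS ?BAT //=.
by rewrite /on_parabola /=; apply/eqP; ring.
Qed.

End Incidences.

Section RealSums.
Variables (R : realFieldType) (I : finType).

Lemma sum_affine (X : {pred I}) (n : I -> R) (u v : R) :
  \sum_(i in X) (u * n i + v) = u * \sum_(i in X) n i + #|X|%:R * v.
Proof. by rewrite big_split /= sumr_const -mulr_sumr mulr_natl. Qed.

Lemma sum_affine_sqr (n : I -> R) (u v : R) :
  \sum_i (u * n i + v) ^+ 2 =
  u ^+ 2 * \sum_i n i ^+ 2 + 2 * u * v * \sum_i n i + #|I|%:R * v ^+ 2.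
Proof.
rewrite (eq_bigr (fun i => u ^+ 2 * n i ^+ 2 + 2 * u * v * n i + v ^+ 2)); last first.
  by move=> i _; ring.
by rewrite !big_split /= sumr_const -!mulr_sumr -[v ^+ 2 *+ _]mulr_natl.
Qed.

(* A weak Cauchy-Schwarz inequality, from (d i - lam)^2 >= 0 on X:
   2 lam (sum over X of d) <= (sum over I of d^2) + |X| lam^2. *)
Lemma sum_sub_le_sqr (X : {pred I}) (d : I -> R) (lam : R) :
  2 * lam * \sum_(i in X) d i <= \sum_i d i ^+ 2 + #|X|%:R * lam ^+ 2.
Proof.
apply: (@le_trans _ _ (\sum_(i in X) (d i ^+ 2 + lam ^+ 2))).
  rewrite mulr_sumr; apply: ler_sum => i _; have := sqr_ge0 (d i - lam); nra.
rewrite big_split /= sumr_const mulr_natl lerD2r [leLHS]big_mkcond /=.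
by apply: ler_sum => i _; case: (i \in X); rewrite ?sqr_ge0.
Qed.

End RealSums.

(* If st < N a / 2, the curves of X exceed the mean by
   more than a/2 on average, which forces a^3 b <= 4 N mu st. *)
Lemma incidence_variance (R : realFieldType) (I : finType) (X : {pred I})
    (n : I -> R) (a b st N mu : R) :
  0 < N -> 0 <= a -> 0 <= b -> 0 <= st ->
  #|X|%:R = a * b -> #|I|%:R = N ^+ 2 ->
  #|X|%:R * a <= \sum_(i in X) n i -> \sum_i n i = st * N ->
  \sum_i n i ^+ 2 <= st * (st + mu * N) ->
  st < N * a / 2 -> a ^+ 3 * b <= 4 * N * mu * st.
Proof.
move=> N_gt0 a_ge0 b_ge0 st_ge0 cardX cardI lowerX sum1 sum2 st_small.
set lam := N * a - st.
have lam_ge : N * a / 2 <= lam by rewrite /lam; lra.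
have ab_ge0 : 0 <= a * b by rewrite mulr_ge0.
have excess : a * b * lam <= \sum_(i in X) (N * n i + - st).
  rewrite sum_affine -cardX /lam.
  by move: lowerX; rewrite -(ler_pM2l N_gt0); lra.
have deviation : \sum_i (N * n i + - st) ^+ 2 <= N ^+ 3 * mu * st.
  rewrite sum_affine_sqr sum1 cardI.
  by move: sum2; rewrite -(ler_pM2l (exprn_gt0 2 N_gt0)); nra.
have weak_cs := sum_sub_le_sqr X (fun i => N * n i + - st) lam.
rewrite cardX in weak_cs.
have lam_sq : a * b * (N * a / 2) ^+ 2 <= a * b * lam ^+ 2.
  by rewrite ler_wpM2l // ler_sqr ?nnegrE; nra.
suff : N ^+ 2 * (a ^+ 3 * b) <= N ^+ 2 * (4 * N * mu * st).
  by rewrite ler_pM2l ?exprn_gt0.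
(* Chaining excess, weak_cs and deviation: a b lam^2 <= N^3 mu st. *)
have lam_ge0 : 0 <= lam by nra.
have := ler_wpM2l (mulr_ge0 (ler0n _ 2) lam_ge0) excess.
nra.
Qed.

(* Turning the variance bound into the sum-product estimate: if
   max(s,t)^2 >= st >= N a / 2 then max(s,t) >= sqrt(N a) / 4, and
   otherwise a^4 <= 4 a^3 b <= 16 N mu max(s,t)^2. *)
Lemma max_ge_min_bound (R : rcfType) (a b s t N mu : R) :
  0 < a -> 0 < N -> 0 < mu -> 0 <= s -> 0 <= t -> a <= 4 * b ->
  (s * t < N * a / 2 -> a ^+ 3 * b <= 4 * N * mu * (s * t)) ->
  1 / 4 * Num.min (Num.sqrt N * Num.sqrt a) (a ^+ 2 / Num.sqrt (N * mu))
    <= Num.max s t.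
Proof.
move=> a_gt0 N_gt0 mu_gt0 s_ge0 t_ge0 ab small_bound.
set m := Num.max s t.
have m_ge0 : 0 <= m by rewrite le_max s_ge0.
have st_le : s * t <= m ^+ 2 by rewrite expr2 ler_pM // ?le_max ?lexx ?orbT.
case: (ltP (s * t) (N * a / 2)) => [small|large].
  apply: le_trans (_ : 1 / 4 * (a ^+ 2 / Num.sqrt (N * mu)) <= m).
    by rewrite ler_pM2l ?divr_gt0 // ge_min lexx orbT.
  set w := Num.sqrt (N * mu).
  have w_gt0 : 0 < w by rewrite sqrtr_gt0 mulr_gt0.
  have w2 : w ^+ 2 = N * mu by rewrite sqr_sqrtr // mulr_ge0 ?ltW.
  have a4 : (a ^+ 2) ^+ 2 <= (4 * w * m) ^+ 2.
    have a3_gt0 : 0 < a ^+ 3 by rewrite exprn_gt0.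
    have Nmu_st : N * mu * (s * t) <= N * mu * m ^+ 2.
      by rewrite ler_pM2l ?mulr_gt0.
    have := small_bound small; move: ab; rewrite -(ler_pM2l a3_gt0).
    rewrite !exprMn w2; nra.
  have a2 : a ^+ 2 <= 4 * w * m.
    have a2_ge0 : 0 <= a ^+ 2 by rewrite exprn_ge0 // ltW.
    have wm_ge0 : 0 <= 4 * w * m by rewrite !mulr_ge0 // ltW.
    by rewrite -ler_sqr ?nnegrE.
  have -> : 1 / 4 * (a ^+ 2 / w) = a ^+ 2 / (4 * w) by field; rewrite gt_eqF.
  by rewrite ler_pdivrMr ?mulr_gt0 // mulrC.
apply: le_trans (_ : 1 / 4 * (Num.sqrt N * Num.sqrt a) <= m).
  by rewrite ler_pM2l ?divr_gt0 // ge_min lexx.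
have : Num.sqrt (N * a) <= 4 * m.
  rewrite -(@ger0_norm _ (4 * m)) ?mulr_ge0 // -sqrtr_sqr; apply: ler_wsqrtr.
  have := sqr_ge0 m; rewrite exprMn [4 ^+ 2]expr2; lra.
by rewrite -sqrtrM ?(ltW N_gt0) //; lra.
Qed.

Lemma sum_product_of_moments (R : rcfType) (I : finType) (X : {pred I})
    (n : I -> nat) (a b s t N mu : nat) :
  (0 < a)%N -> (0 < N)%N -> (0 < mu)%N -> (a <= 4 * b)%N ->
  #|X| = (a * b)%N -> #|I| = (N ^ 2)%N ->
  (#|X| * a <= \sum_(i in X) n i)%N -> (\sum_i n i = s * t * N)%N ->
  (\sum_i n i ^ 2 <= s * t * (s * t + mu * N))%N ->
  1 / 4 * Num.min (Num.sqrt N%:R * Num.sqrt a%:R)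
                  (a%:R ^+ 2 / Num.sqrt (N%:R * mu%:R))
    <= Num.max (s%:R : R) t%:R.
Proof.
move=> a_gt0 N_gt0 mu_gt0 ab cardX cardI lowerX sum1 sum2.
apply: (@max_ge_min_bound _ _ b%:R); rewrite ?ltr0n ?ler0n //.
  by rewrite -natrM ler_nat.
move=> small; apply: (@incidence_variance _ _ X (fun i => (n i)%:R)) => //.
- by rewrite ltr0n.
- by apply: mulr_ge0; apply: ler0n.
- by rewrite cardX natrM.
- by rewrite cardI natrX.
- by rewrite -natr_sum -natrM ler_nat.
- by rewrite -natr_sum sum1 !natrM.
- under eq_bigr do rewrite -natrX.
  by rewrite -natr_sum -!natrM -natrD -!natrM ler_nat.
Qed.

Theorem theorem1p4 :
  exists C : real, 0 < C /\
  forall (Rg : finComUnitRingType) (z : Rg) (q r : nat),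
    finite_valuation_ring Rg ->
    is_maximal_ideal (pideal z) ->
    q = quot_card (pideal z) ->
    (0 < r)%N -> z ^+ r = 0 -> (forall k, (0 < k < r)%N -> z ^+ k != 0) ->
    (exists p k : nat, [/\ prime p, odd p, (0 < k)%N & q = (p ^ k)%N]) ->
    forall A : {set Rg},
      (2 * q ^ r.-1 <= #|A|)%N ->
      Num.max (#|sumset A|%:R : real) (#|sumset (sqset A)|%:R)
        >= C * Num.min (Num.sqrt (q%:R ^+ r) * Num.sqrt #|A|%:R)
                       (#|A|%:R ^+ 2 / Num.sqrt (q%:R ^+ (2 * r - 1)%N)).
Proof.
exists (1 / 4); split; first by rewrite divr_gt0.
move=> Rg z q r _ max_z q_def r_gt0 zr0 zk_neq0 [p [k [p_prime p_odd _ q_pk]]] A A_large.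
have [cardM cardR] := card_max_ideal_ring max_z r_gt0 zr0 zk_neq0.
rewrite -q_def in cardM cardR.
have q_gt0 : (0 < q)%N by rewrite q_pk expn_gt0 prime_gt0.
have two_unit : (2 : Rg) \is a GRing.unit.
  by apply: two_unit_odd_card; rewrite cardR q_pk !oddX p_odd !orbT.
set B := sqset A; set S := sumset A; set T := sumset B.
have AAS a c : a \in A -> c \in A -> a + c \in S by move=> aA cA; apply: imset2_f.
have BAT b c : b \in B -> c \in A -> b + c ^+ 2 \in T.
  by move=> bB cA; apply: imset2_f => //; apply: imset_f.
have A_le_B : (#|A| <= 4 * #|B|)%N.
  by have := card_sqset max_z zr0 two_unit A; rewrite -/B cardM; lia.
have -> : (q%:R ^+ r : real) = #|Rg|%:R by rewrite -natrX cardR.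
have -> : (q%:R ^+ (2 * r - 1) : real) = #|Rg|%:R * #|pideal z|%:R.
  by rewrite -natrX -natrM cardR cardM -expnD; congr (q ^ _)%:R; lia.
apply: (@sum_product_of_moments _ _ (setX A B) (incidences S T) _ #|B|) => //.
- by apply: leq_trans A_large; rewrite muln_gt0 expn_gt0 q_gt0.
- by rewrite cardR expn_gt0 q_gt0.
- exact: cardsX.
- by rewrite card_prod mulnn.
- exact: incidences_lower.
- by rewrite sum_incidences cardsX.
- by have := sum_incidences_sqr (unit_notin_max max_z zr0) two_unit S T; rewrite cardsX.
Qed.
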